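(* Let $n\geq 3$ and let $C_n^*$ be the bigraded complex described in the context. Let $D$ be a bigraded $S^3$-knotlike chain complex over $R$ and let $f\colon C_n^*\to D$ be a local map. Then there does not exist a local map $g\colon D\to C_n^*$ such that $g\circ f$ is homogeneous of bigrading $(c_1,c_2)$ with $c_1>-2n+2$ and $c_2>-2n$.
   Context: Let $\mathbb{F}=\mathbb{Z}/2$ and $R=\mathbb{F}[\mathcal{U},\mathcal{V}]$, bigraded by $(\operatorname{gr}_{\mathcal{U}},\operatorname{gr}_{\mathcal{V}})$ with $\mathcal{U}$ of bigrading $(-2,0)$ and $\mathcal{V}$ of bigrading $(0,-2)$; complexes have differentials of bigrading $(-1,-1)$. A local map between complexes over $R$ is an $R$-linear homogeneous chain map inducing an isomorphism on homology after localizing at $\mathcal{U}$ and $\mathcal{V}$ (i.e. after tensoring with $\mathbb{F}[\mathcal{U},\mathcal{V},\mathcal{U}^{-1},\mathcal{V}^{-1}]$). A map is homogeneous of bigrading $(c_1,c_2)$ if it sends elements of bigrading $(a,b)$ to elements of bigrading $(a+c_1,b+c_2)$. A complex $D$ over $R$ is $S^3$-knotlike if $H_*(D\otimes_R\mathbb{F}[\mathcal{U}])\cong\mathbb{F}[\mathcal{U}]$, where $\mathcal{V}$ acts on $\mathbb{F}[\mathcal{U}]$ as $1$. For $n\geq 3$, $C_n^*$ is the free $R$-module with basis $\alpha^*_s$ ($1\leq s\leq 2n-1$); $\widetilde{\alpha}^*_s$ ($1\leq s\leq n-2$ and $n+1\leq s\leq 2n-2$); $b^{*,(s)}_{n-1}$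 ($1\leq s\leq n-2$); $b^{*,(s)}_{n}$ ($1\leq s\leq 2n-2$); $b^{*,(s)}_{n+1}$ ($n+1\leq s\leq 2n-2$), with $R$-linear differential $\partial$ given by $\partial\alpha^*_s=0$, $\partial\widetilde{\alpha}^*_s=0$, and $\partial b^{*,(s)}_{n-1}=\mathcal{U}^{n(n-1)/2}\mathcal{V}^{n(n-1)/2}\alpha^*_s+\mathcal{V}^{n-s-1}\widetilde{\alpha}^*_s$ for $1\leq s\leq n-2$; $\partial b^{*,(s)}_{n}=\mathcal{U}^{n(n+1)/2-s}\mathcal{V}^{n(n+1)/2}\alpha^*_{s+1}+\mathcal{U}^{n}\widetilde{\alpha}^*_s$ for $1\leq s\leq n-2$; $\partial b^{*,(s)}_{n}=\mathcal{U}^{n(n+1)/2}\mathcal{V}^{n(n-1)/2-n+s+1}\alpha^*_s+\mathcal{U}^{n(n+1)/2-s}\mathcal{V}^{n(n+1)/2}\alpha^*_{s+1}$ for $n-1\leq s\leq n$; $\partial b^{*,(s)}_{n}=\mathcal{U}^{n(n+1)/2}\mathcal{V}^{n(n-1)/2-n+s+1}\alpha^*_s+\mathcal{V}^{n}\widetilde{\alpha}^*_s$ for $n+1\leq s\leq 2n-2$; $\partial b^{*,(s)}_{n+1}=\mathcal{U}^{n(n-1)/2}\mathcal{V}^{n(n-1)/2}\alpha^*_{s+1}+\mathcal{U}^{s-n}\widetilde{\alpha}^*_s$ for $n+1\leq s\leq 2n-2$. The basis elements are assigned bigradings so that $\partial$ is homogeneous of bigrading $(-1,-1)$ (unique up to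 an overall shift; any such choice is fixed). *)

From HB Require Import structures.
From mathcomp Require Import all_boot all_order all_algebra fraction.
Set Implicit Arguments. Unset Strict Implicit. Unset Printing Implicit Defensive.
Import Order.TTheory GRing.Theory Num.Theory.
Local Open Scope ring_scope.

(* F = Z/2, R = F[U,V], realised as F[U][V]: V is the outer variable. *)
Definition F2 : fieldType := 'F_2.
Definition R : idomainType := {poly {poly F2}}.
Definition Uvar : R := ('X : {poly F2})%:P.
Definition Vvar : R := 'X.
(* The monomial U^a V^b, of bigrading (-2a, -2b). *)
Definition mono (a b : nat) : R := Uvar ^+ a * Vvar ^+ b.

(* A bigraded free finitely generated R-module is given by a finite basis
   X and a bigrading gr : X -> int * int of the basis elements.
   An R-linear map phi between such modules is given by its coefficients:
   phi x = \sum_y phi x y * y. *)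
Definition homogeneous (X Y : finType) (grX : X -> int * int)
  (grY : Y -> int * int) (phi : X -> Y -> R) (c : int * int) : Prop :=
  forall x y, phi x y = 0 \/
    exists a b : nat, phi x y = mono a b /\
      (grY y).1 - (2 * a)%:Z = (grX x).1 + c.1 /\
      (grY y).2 - (2 * b)%:Z = (grX x).2 + c.2.

Definition mcomp (X Y Z : finType) (phi : X -> Y -> R) (psi : Y -> Z -> R) :
  X -> Z -> R := fun x z => \sum_y phi x y * psi y z.

Definition is_complex (X : finType) (gr : X -> int * int) (d : X -> X -> R) :=
  homogeneous gr gr d (-1, -1) /\ forall x z, mcomp d d x z = 0.

Definition chain_map (X Y : finType) (dX : X -> X -> R) (dY : Y -> Y -> R)
  (phi : X -> Y -> R) := forall x z, mcomp dX phi x z = mcomp phi dY x z.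

(* Localisation at U and V: F[U,V,U^-1,V^-1], realised inside the
   fraction field of R as the elements r / (U^a V^b). *)
Definition K := {fraction R}.
Definition toK (r : R) : K := FracField.tofrac r.
Definition inL (k : K) : Prop :=
  exists (a b : nat) (r : R), toK (mono a b) * k = toK r.

(* Applying a map (given by coefficients) to an element of the localised
   module (L tensor_R free module), an element being a function X -> K
   with values in L. *)
Definition lapp (X Y : finType) (phi : X -> Y -> R) (v : X -> K) : Y -> K :=
  fun y => \sum_x v x * toK (phi x y).

Definition lvec (X : finType) (v : X -> K) := forall x, inL (v x).

(* phi induces an isomorphism on homology after localisation: the induced
   map [w] |-> [phi w] on H_*(L (x) X) -> H_*(L (x) Y) is surjective and
   injective. *)
Definition loc_iso (X Y : finType) (dX : X -> X -> R) (dY : Y -> Y -> R)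
  (phi : X -> Y -> R) : Prop :=
  (forall z : Y -> K, lvec z -> (forall y, lapp dY z y = 0) ->
     exists (w : X -> K) (u : Y -> K), lvec w /\ lvec u /\
       (forall x, lapp dX w x = 0) /\
       (forall y, lapp phi w y - z y = lapp dY u y)) /\
  (forall w : X -> K, lvec w -> (forall x, lapp dX w x = 0) ->
     (exists u : Y -> K, lvec u /\ forall y, lapp phi w y = lapp dY u y) ->
     exists t : X -> K, lvec t /\ forall x, w x = lapp dX t x).

Definition local_map (X Y : finType) (grX : X -> int * int) (dX : X -> X -> R)
  (grY : Y -> int * int) (dY : Y -> Y -> R) (phi : X -> Y -> R) : Prop :=
  (exists c, homogeneous grX grY phi c) /\ chain_map dX dY phi /\
  loc_iso dX dY phi.

(* Tensoring with F[U] where V acts as 1: apply r |-> r(V := 1). *)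
Definition setV1 (r : R) : {poly F2} := r.[1].
Definition uapp (X Y : finType) (phi : X -> Y -> R) (v : X -> {poly F2}) :
  Y -> {poly F2} := fun y => \sum_x v x * setV1 (phi x y).

(* S^3-knotlike: H_*(D (x)_R F[U]) is isomorphic to F[U] as an
   F[U]-module, i.e. it is free of rank one, generated by the class of
   some cycle z (the image of 1 under the isomorphism). *)
Definition knotlike (X : finType) (d : X -> X -> R) : Prop :=
  exists z : X -> {poly F2}, (forall x, uapp d z x = 0) /\
    (forall y : X -> {poly F2}, (forall x, uapp d y x = 0) ->
       exists (p : {poly F2}) (u : X -> {poly F2}),
         forall x, y x = p * z x + uapp d u x) /\
    (forall (p : {poly F2}) (u : X -> {poly F2}),
       (forall x, p * z x = uapp d u x) -> p = 0).

Inductive ckind := KA | KAt | KB1 | KB2 | KB3.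
(* KA = alpha^*, KAt = tilde alpha^*, KB1 = b_{n-1}^*, KB2 = b_n^*,
   KB3 = b_{n+1}^*. *)
Definition ckind2o (k : ckind) : 'I_5 :=
  match k with KA => inord 0 | KAt => inord 1 | KB1 => inord 2
  | KB2 => inord 3 | KB3 => inord 4 end.
Definition o2ckind (i : 'I_5) : ckind :=
  match val i with 0 => KA | 1 => KAt | 2 => KB1 | 3 => KB2 | _ => KB3 end.
Lemma ckindK : cancel ckind2o o2ckind.
Proof. by case; rewrite /o2ckind /= inordK. Qed.
HB.instance Definition _ := Finite.copy ckind (can_type ckindK).

Arguments ckindK : clear implicits.
Definition cvalid (n : nat) (x : ckind * 'I_(2 * n)) : bool :=
  let s := val x.2 in
  match x.1 with
  | KA => (1 <= s <= 2 * n - 1)%N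
  | KAt => (1 <= s <= n - 2)%N || (n + 1 <= s <= 2 * n - 2)%N
  | KB1 => (1 <= s <= n - 2)%N
  | KB2 => (1 <= s <= 2 * n - 2)%N
  | KB3 => (n + 1 <= s <= 2 * n - 2)%N
  end.

Arguments cvalid n x : clear implicits.
Definition Cgen (n : nat) : finType := {x : ckind * 'I_(2 * n) | cvalid n x}.

Definition dC (n : nat) (x y : Cgen n) : R :=
  let N := ((n * (n - 1)) %/ 2)%N in
  let M := ((n * (n + 1)) %/ 2)%N in
  let s := val (val x).2 in
  let t := val (val y).2 in
  match (val x).1, (val y).1 with
  | KB1, KA => if t == s then mono N N else 0
  | KB1, KAt => if t == s then mono 0 (n - s - 1)%N else 0
  | KB2, KA =>
      if (s <= n - 2)%N then (if t == s.+1 then mono (M - s)%N M else 0)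
      else if (s <= n)%N then
        (if t == s then mono M (N + s + 1 - n)%N
         else if t == s.+1 then mono (M - s)%N M else 0)
      else (if t == s then mono M (N + s + 1 - n)%N else 0)
  | KB2, KAt =>
      if (s <= n - 2)%N && (t == s) then mono n 0
      else if (n + 1 <= s)%N && (t == s) then mono 0 n else 0
  | KB3, KA => if t == s.+1 then mono N N else 0
  | KB3, KAt => if t == s then mono (s - n)%N 0 else 0
  | _, _ => 0
  end.
Arguments dC n x y : clear implicits.

(* Write H = g o f, an endomorphism of C_n^*. The differential of C_n^* pins
   down its bigrading, and every generator other than alpha_n lies at least 2n
   below alpha_n in one of the two gradings; so the bounds on the bigrading of
   H force H(alpha_n) = h alpha_n with h = 0 or h = U^k V^l, k <= n - 2.
   After localisation f and g are injective on homology, and alpha_n is not a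
   boundary there: every differential has exactly two monomial coefficients, so
   summing the coordinates and evaluating at U = V = 1 kills all boundaries.
   Hence h <> 0. Over F[U], tau = alpha_n + U^(n-1) alpha_(n-1) is a cycle with
   U^(M-n+1) tau = d b_n^(n-1), M = n(n+1)/2. As H_*(D (x) F[U]) = F[U] has no
   torsion, f(tau) is a boundary, and so is H(tau). But the alpha_n-coordinate
   of a boundary of C_n^* (x) F[U] is divisible by U^(n-1), whereas that of
   H(tau) is U^k + U^(n-1) (...) with k < n - 1. *)

From HB Require Import structures.
From mathcomp Require Import all_boot all_order all_algebra fraction.
From mathcomp Require Import zify ring.
Import Order.TTheory GRing.Theory Num.Theory.
Set Implicit Arguments. Unset Strict Implicit. Unset Printing Implicit Defensive.
Local Open Scope ring_scope.

(** * Monomials and specialisations of R *)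

HB.instance Definition _ := GRing.RMorphism.copy setV1 (horner_eval (1 : {poly F2})).
HB.instance Definition _ := GRing.RMorphism.copy toK (@tofrac R).

Definition ev11 (r : R) : F2 := (setV1 r).[1].
Arguments ev11 : simpl never.
HB.instance Definition _ := GRing.RMorphism.copy ev11 (horner_eval 1 \o setV1).

Lemma monoD a b a' b' : mono (a + a') (b + b') = mono a b * mono a' b'.
Proof. by rewrite /mono !exprD; ring. Qed.

Lemma coef_mono a b j : (mono a b)`_j = if j == b then 'X^a else 0.
Proof.
rewrite /mono /Uvar /Vvar -rmorphXn coefCM coefXn.
by case: eqP; rewrite ?mulr1 ?mulr0.
Qed.

Lemma mono_neq0 a b : mono a b != 0.
Proof.
apply/eqP => /(congr1 (fun p : R => p`_b)) /eqP.
by rewrite coef_mono eqxx coef0 expf_eq0 polyX_eq0 andbF.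
Qed.

Lemma mono_exps_inj a b a' b' : mono a b = mono a' b' -> a = a' /\ b = b'.
Proof.
move=> e; have eb : b = b'.
  move: (congr1 (fun p : R => p`_b) e); rewrite !coef_mono eqxx.
  by case: eqP => // _ /eqP; rewrite expf_eq0 polyX_eq0 andbF.
split=> //; move: (congr1 (fun p : R => size p`_b) e).
by rewrite !coef_mono eb eqxx !size_polyXn => -[].
Qed.

Lemma setV1_mono a b : setV1 (mono a b) = 'X^a.
Proof. by rewrite /setV1 /mono /Uvar /Vvar -rmorphXn hornerCM hornerXn expr1n mulr1. Qed.

Lemma ev11_mono a b : ev11 (mono a b) = 1.
Proof. by rewrite /ev11 setV1_mono hornerXn expr1n. Qed.

Lemma F2_add11 : (1 + 1 : F2) = 0.
Proof. by apply/eqP. Qed.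

Lemma sumr_mulrn_pred1 (X : finType) (V : zmodType) (a : X) (v : V) :
  \sum_y v *+ (y == a) = v.
Proof.
rewrite (bigD1 a) //= eqxx mulr1n big1 ?addr0 // => y /negPf->.
by rewrite mulr0n.
Qed.

Lemma toK_inj : injective toK.
Proof. by move=> x y /eqP; rewrite /toK tofrac_eq => /eqP. Qed.

(** * Maps given by coefficient matrices *)

Section MatrixAction.
Variables (S : comNzRingType) (h : {rmorphism R -> S}).

Definition act (X Y : finType) (phi : X -> Y -> R) (v : X -> S) : Y -> S :=
  fun y => \sum_x v x * h (phi x y).

Lemma eq_act (X Y : finType) (phi : X -> Y -> R) v w :
  v =1 w -> act phi v =1 act phi w.
Proof. by move=> e y; apply: eq_bigr => x _; rewrite e. Qed.

Lemma act0 (X Y : finType) (phi : X -> Y -> R) : act phi (fun=> 0) =1 (fun=> 0).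
Proof. by move=> y; apply: big1 => x _; rewrite mul0r. Qed.

Lemma act_delta (X Y : finType) (phi : X -> Y -> R) a :
  act phi (fun x => (x == a)%:R) =1 (fun y => h (phi a y)).
Proof.
move=> y; rewrite /act (bigD1 a) //= eqxx mul1r big1 ?addr0 // => x /negPf->.
by rewrite mul0r.
Qed.

Lemma actZ (X Y : finType) (phi : X -> Y -> R) c v :
  act phi (fun x => c * v x) =1 (fun y => c * act phi v y).
Proof. by move=> y; rewrite /act mulr_sumr; apply: eq_bigr => x _; rewrite mulrA. Qed.

Lemma actB (X Y : finType) (phi : X -> Y -> R) v w :
  act phi (fun x => v x - w x) =1 (fun y => act phi v y - act phi w y).
Proof. by move=> y; rewrite /act -sumrB; apply: eq_bigr => x _; rewrite mulrBl. Qed.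

Lemma actD (X Y : finType) (phi : X -> Y -> R) v w :
  act phi (fun x => v x + w x) =1 (fun y => act phi v y + act phi w y).
Proof. by move=> y; rewrite /act -big_split; apply: eq_bigr => x _; rewrite mulrDl. Qed.

Lemma act_comp (X Y Z : finType) (phi : X -> Y -> R) (psi : Y -> Z -> R) v :
  act psi (act phi v) =1 act (mcomp phi psi) v.
Proof.
move=> z; rewrite /act /mcomp.
under eq_bigr => y _ do rewrite mulr_suml.
rewrite exchange_big; apply: eq_bigr => x _.
by rewrite rmorph_sum mulr_sumr; apply: eq_bigr => y _; rewrite rmorphM mulrA.
Qed.

Section ChainMap.
Variables (X Y : finType) (dX : X -> X -> R) (dY : Y -> Y -> R) (phi : X -> Y -> R).
Hypothesis phi_chain : chain_map dX dY phi.

Lemma act_chain v : act dY (act phi v) =1 act phi (act dX v).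
Proof. by move=> y; rewrite !act_comp; apply: eq_bigr => x _; rewrite phi_chain. Qed.

Lemma act_cycle v : act dX v =1 (fun=> 0) -> act dY (act phi v) =1 (fun=> 0).
Proof. by move=> hv y; rewrite act_chain (eq_act _ hv) act0. Qed.

Lemma act_boundary v u : v =1 act dX u -> act phi v =1 act dY (act phi u).
Proof. by move=> hv y; rewrite act_chain (eq_act _ hv). Qed.

End ChainMap.

End MatrixAction.

Lemma uappE (X Y : finType) (phi : X -> Y -> R) v : uapp phi v = act setV1 phi v.
Proof. by []. Qed.

Lemma lappE (X Y : finType) (phi : X -> Y -> R) v : lapp phi v = act toK phi v.
Proof. by []. Qed.

(** * Knotlike complexes and localised homology *)

Lemma knotlike_torsion_boundary (X : finType) (d : X -> X -> R) (c : {poly F2})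
    (v w : X -> {poly F2}) :
  knotlike d -> c != 0 -> act setV1 d v =1 (fun=> 0) ->
  (forall x, c * v x = act setV1 d w x) -> exists u, v =1 act setV1 d u.
Proof.
move=> [z [_ [z_span z_free]]] c_neq0 v_cycle cv_bd.
have [p [u v_eq]] := z_span v v_cycle.
have cp0 : c * p = 0.
  apply: (z_free _ (fun x => w x - c * u x)) => x.
  by rewrite uappE actB actZ -cv_bd v_eq uappE; ring.
have p0 : p = 0 by move/eqP: cp0; rewrite mulf_eq0 (negPf c_neq0) => /eqP.
by exists u => x; rewrite v_eq p0 mul0r add0r.
Qed.

Lemma inL_toK r : inL (toK r).
Proof. by exists 0%N, 0%N, r; rewrite /mono !expr0 mulr1 rmorph1 mul1r. Qed.

Lemma inLD k k' : inL k -> inL k' -> inL (k + k').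
Proof.
move=> [a [b [r e]]] [a' [b' [r' e']]].
exists (a + a')%N, (b + b')%N, (mono a' b' * r + mono a b * r').
by rewrite monoD rmorphD !(rmorphM _ (mono _ _)) /= -e -e'; ring.
Qed.

Lemma inLMr k r : inL k -> inL (k * toK r).
Proof. by move=> [a [b [r' e]]]; exists a, b, (r' * r); rewrite mulrA e rmorphM. Qed.

Lemma lvec_act (X Y : finType) (phi : X -> Y -> R) v : lvec v -> lvec (act toK phi v).
Proof.
move=> hv y; rewrite /act; elim/big_ind: _ => [|k k'|x _]; last exact: inLMr.
- by rewrite -(rmorph0 toK); exact: inL_toK.
- exact: inLD.
Qed.

Lemma lvec_common_denominator (X : finType) (t : X -> K) :
  lvec t -> exists a b (r : X -> R), forall x, toK (mono a b) * t x = toK (r x).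
Proof.
move=> ht; have /fin_all_exists [ab hab] : forall x, exists ab : nat * nat * R,
    toK (mono ab.1.1 ab.1.2) * t x = toK ab.2.
  by move=> x; have [a [b [r e]]] := ht x; exists (a, b, r).
exists (\sum_x (ab x).1.1)%N, (\sum_x (ab x).1.2)%N.
exists (fun x => mono ((\sum_x' (ab x').1.1) - (ab x).1.1)
                      ((\sum_x' (ab x').1.2) - (ab x).1.2) * (ab x).2).
move=> x; rewrite (rmorphM _ (mono _ _)) /= -hab mulrA -rmorphM -monoD !subnK //.
  by rewrite (bigD1 x) //= leq_addr.
by rewrite (bigD1 x) //= leq_addr.
Qed.

Lemma loc_iso_comp_injective (X Y Z : finType) (dX : X -> X -> R) (dY : Y -> Y -> R)
    (dZ : Z -> Z -> R) (f : X -> Y -> R) (g : Y -> Z -> R) (w : X -> K) :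
  chain_map dX dY f -> loc_iso dX dY f -> loc_iso dY dZ g ->
  lvec w -> act toK dX w =1 (fun=> 0) ->
  (exists u, lvec u /\ act toK (mcomp f g) w =1 act toK dZ u) ->
  exists t, lvec t /\ w =1 act toK dX t.
Proof.
move=> f_chain [_ f_inj] [_ g_inj] w_loc w_cycle [u [u_loc gfw]].
apply: f_inj => //; apply: g_inj; first exact: lvec_act.
  exact: act_cycle.
by exists u; split=> // z; rewrite !lappE act_comp gfw.
Qed.

Lemma delta_not_loc_boundary (X : finType) (d : X -> X -> R) (a : X) :
  (forall x, ev11 (\sum_y d x y) = 0) ->
  ~ exists t, lvec t /\ (fun y => (y == a)%:R) =1 act toK d t.
Proof.
move=> d_ev [t [t_loc a_bd]].
have [p [q [r hr]]] := lvec_common_denominator t_loc.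
have : toK (mono p q) = toK (\sum_x r x * \sum_y d x y).
  transitivity (toK (mono p q) * \sum_y (y == a)%:R).
    rewrite (bigD1 a) //= eqxx big1 ?addr0 ?mulr1 // => y /negPf->.
    by rewrite mulr0n.
  rewrite (eq_bigr _ (fun y _ => a_bd y)) /act exchange_big rmorph_sum mulr_sumr.
  by apply: eq_bigr => x _; rewrite -mulr_sumr mulrA hr rmorphM rmorph_sum.
move/toK_inj/(congr1 ev11); rewrite ev11_mono rmorph_sum big1 => [|x _].
  by move/eqP; rewrite oner_eq0.
by rewrite rmorphM /= d_ev mulr0.
Qed.

(** * The complex C_n^* *)

Definition NN n := ((n * (n - 1)) %/ 2)%N.
Definition MM n := ((n * (n + 1)) %/ 2)%N.

Lemma MM_NN n : MM n = (NN n + n)%N.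
Proof.
rewrite /MM /NN; case: n => [//|n].
rewrite subn1 /= (_ : (n.+1 * (n.+1 + 1) = n.+1 * n + 2 * n.+1)%N); last by ring.
by rewrite divnDr ?dvdn_mulr // mulKn.
Qed.

Lemma NN_ge n : (3 <= n)%N -> (n <= NN n)%N.
Proof.
move=> hn; rewrite /NN -{1}(mulKn n (isT : (0 < 2)%N)) leq_div2r //.
by rewrite mulnC leq_mul2l; apply/orP; right; lia.
Qed.

Definition kind n (x : Cgen n) : ckind := (val x).1.
Definition idx n (x : Cgen n) : nat := val (val x).2.
Definition is_gen n (x : Cgen n) k s := kind x = k /\ idx x = s.

Definition ckind_code (k : ckind) : nat :=
  match k with KA => 0 | KAt => 1 | KB1 => 2 | KB2 => 3 | KB3 => 4 end.

Lemma ckind_eqE k k' : (k == k') = (ckind_code k == ckind_code k').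
Proof. by apply/eqP/eqP => [->|]; case: k; case: k'. Qed.

Definition cvalidn n (k : ckind) (s : nat) : bool :=
  match k with
  | KA => (1 <= s <= 2 * n - 1)%N
  | KAt => (1 <= s <= n - 2)%N || (n + 1 <= s <= 2 * n - 2)%N
  | KB1 => (1 <= s <= n - 2)%N
  | KB2 => (1 <= s <= 2 * n - 2)%N
  | KB3 => (n + 1 <= s <= 2 * n - 2)%N
  end.

Lemma gen_valid n (x : Cgen n) : cvalidn n (kind x) (idx x).
Proof. by case: x => -[]. Qed.

Lemma gen_cases n (x : Cgen n) : exists k s, is_gen x k s /\ cvalidn n k s.
Proof. by exists (kind x), (idx x); split; last exact: gen_valid. Qed.

Lemma gen_exists n k s : cvalidn n k s -> exists x : Cgen n, is_gen x k s.
Proof.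
move=> hks; have s_lt : (s < 2 * n)%N by case: k hks => /=; lia.
by exists (exist _ (k, Ordinal s_lt) hks).
Qed.
Arguments gen_exists : clear implicits.

Ltac cvalid_lia := rewrite /cvalidn; lia.

Lemma gen_inj n (x y : Cgen n) k s : is_gen x k s -> is_gen y k s -> x = y.
Proof.
move=> [kx sx] [ky sy]; apply/val_inj/eqP/andP.
split; apply/eqP; first exact: etrans kx (esym ky).
by apply/val_inj; exact: etrans sx (esym sy).
Qed.

Lemma is_gen_eq n (y y1 : Cgen n) k s :
  is_gen y1 k s -> (y == y1) = (kind y == k) && (idx y == s).
Proof.
move=> hy1; apply/eqP/andP => [->|[/eqP hk /eqP hs]]; first by case: hy1 => -> ->.
exact: gen_inj hy1.
Qed.

Definition dCf (n : nat) (kx : ckind) (s : nat) (ky : ckind) (t : nat) : R :=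
  let N := NN n in
  let M := MM n in
  match kx, ky with
  | KB1, KA => if t == s then mono N N else 0
  | KB1, KAt => if t == s then mono 0 (n - s - 1)%N else 0
  | KB2, KA =>
      if (s <= n - 2)%N then (if t == s.+1 then mono (M - s)%N M else 0)
      else if (s <= n)%N then
        (if t == s then mono M (N + s + 1 - n)%N
         else if t == s.+1 then mono (M - s)%N M else 0)
      else (if t == s then mono M (N + s + 1 - n)%N else 0)
  | KB2, KAt =>
      if (s <= n - 2)%N && (t == s) then mono n 0
      else if (n + 1 <= s)%N && (t == s) then mono 0 n else 0
  | KB3, KA => if t == s.+1 then mono N N else 0
  | KB3, KAt => if t == s then mono (s - n)%N 0 else 0
  | _, _ => 0
  end.

Lemma dCE n (x y : Cgen n) : dC n x y = dCf n (kind x) (idx x) (kind y) (idx y).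
Proof. by []. Qed.

Lemma dC_gen n (x y : Cgen n) kx s ky t :
  is_gen x kx s -> is_gen y ky t -> dC n x y = dCf n kx s ky t.
Proof. by move=> [hk hs] [hk' ht]; rewrite dCE hk hs hk' ht. Qed.

Lemma dC_alpha n (x y : Cgen n) : kind x = KA -> dC n x y = 0.
Proof. by rewrite dCE => ->; case: (kind y). Qed.

(* The goals are closed by [exact] rather than [rewrite addr0]: rewriting makes
   Rocq try to unify 0 with concrete monomials, which takes forever. *)
Ltac eval_dCf :=
  rewrite /dCf /= ?mulrb; repeat case: ifP => ?;
  first [done | exact: esym (addr0 _) | exact: esym (add0r _) | lia].

Section Table.
Variables (n : nat).
Local Unset Implicit Arguments.
Let N := NN n.
Let M := MM n.

Lemma dCf_b1_alpha s : dCf n KB1 s KA s = mono N N.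
Proof. eval_dCf. Qed.
Lemma dCf_b1_talpha s : dCf n KB1 s KAt s = mono 0 (n - s - 1).
Proof. eval_dCf. Qed.
Lemma dCf_b2_alpha_succ s : (s <= n)%N -> dCf n KB2 s KA s.+1 = mono (M - s) M.
Proof. eval_dCf. Qed.
Lemma dCf_b2_talpha_low s : (s <= n - 2)%N -> dCf n KB2 s KAt s = mono n 0.
Proof. eval_dCf. Qed.
Lemma dCf_b2_alpha s : (1 < n)%N -> (n - 1 <= s)%N ->
  dCf n KB2 s KA s = mono M (N + s + 1 - n).
Proof. eval_dCf. Qed.
Lemma dCf_b2_talpha_high s : (n + 1 <= s)%N -> dCf n KB2 s KAt s = mono 0 n.
Proof. eval_dCf. Qed.
Lemma dCf_b3_alpha_succ s : dCf n KB3 s KA s.+1 = mono N N.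
Proof. eval_dCf. Qed.
Lemma dCf_b3_talpha s : dCf n KB3 s KAt s = mono (s - n) 0.
Proof. eval_dCf. Qed.

Local Set Implicit Arguments.

Ltac eval_row hx hy1 hy2 y :=
  rewrite dCE; case: hx => -> ->; rewrite (is_gen_eq _ hy1) (is_gen_eq _ hy2);
  case: (kind y); rewrite !ckind_eqE; eval_dCf.

Lemma dC_b1_row (x y1 y2 : Cgen n) s :
  is_gen x KB1 s -> is_gen y1 KA s -> is_gen y2 KAt s ->
  forall y, dC n x y = mono N N *+ (y == y1) + mono 0 (n - s - 1) *+ (y == y2).
Proof. by move=> hx hy1 hy2 y; eval_row hx hy1 hy2 y. Qed.

Lemma dC_b2_row_low (x y1 y2 : Cgen n) s : (s <= n - 2)%N ->
  is_gen x KB2 s -> is_gen y1 KA s.+1 -> is_gen y2 KAt s ->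
  forall y, dC n x y = mono (M - s) M *+ (y == y1) + mono n 0 *+ (y == y2).
Proof. by move=> hs hx hy1 hy2 y; eval_row hx hy1 hy2 y. Qed.

Lemma dC_b2_row_mid (x y1 y2 : Cgen n) s : (1 < n)%N -> (n - 1 <= s <= n)%N ->
  is_gen x KB2 s -> is_gen y1 KA s -> is_gen y2 KA s.+1 ->
  forall y, dC n x y = mono M (N + s + 1 - n) *+ (y == y1) + mono (M - s) M *+ (y == y2).
Proof. by move=> n_gt1 hs hx hy1 hy2 y; eval_row hx hy1 hy2 y. Qed.

Lemma dC_b2_row_high (x y1 y2 : Cgen n) s : (n + 1 <= s)%N ->
  is_gen x KB2 s -> is_gen y1 KA s -> is_gen y2 KAt s ->
  forall y, dC n x y = mono M (N + s + 1 - n) *+ (y == y1) + mono 0 n *+ (y == y2).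
Proof. by move=> hs hx hy1 hy2 y; eval_row hx hy1 hy2 y. Qed.

Lemma dC_b3_row (x y1 y2 : Cgen n) s :
  is_gen x KB3 s -> is_gen y1 KA s.+1 -> is_gen y2 KAt s ->
  forall y, dC n x y = mono N N *+ (y == y1) + mono (s - n) 0 *+ (y == y2).
Proof. by move=> hx hy1 hy2 y; eval_row hx hy1 hy2 y. Qed.

End Table.

Definition torsion_cycle n (am an : Cgen n) (y : Cgen n) : {poly F2} :=
  (y == an)%:R + 'X^(n - 1) * (y == am)%:R.

Section Differential.
Variables (n : nat).
Hypothesis n_ge3 : (3 <= n)%N.

Lemma ev11_sum_dC (x : Cgen n) : ev11 (\sum_y dC n x y) = 0.
Proof.
have two_terms y1 y2 a1 b1 a2 b2 :
    (forall y, dC n x y = mono a1 b1 *+ (y == y1) + mono a2 b2 *+ (y == y2)) ->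
    ev11 (\sum_y dC n x y) = 0.
  move=> row; rewrite (eq_bigr _ (fun y _ => row y)) big_split /=.
  by rewrite !sumr_mulrn_pred1 rmorphD /= !ev11_mono F2_add11.
have [k [s [hx hs]]] := gen_cases x; case: k hx hs => hx /= hs.
- by rewrite big1 ?rmorph0 // => y _; apply: dC_alpha; case: hx.
- by rewrite big1 ?rmorph0 // => y _; rewrite dCE; case: hx => -> _; case: (kind y).
- have [y1 hy1] := gen_exists n KA s ltac:(cvalid_lia).
  have [y2 hy2] := gen_exists n KAt s ltac:(cvalid_lia).
  exact: two_terms (dC_b1_row hx hy1 hy2).
- case: (leqP s (n - 2)) => [s_low | s_gt].
    have [y1 hy1] := gen_exists n KA s.+1 ltac:(cvalid_lia).
    have [y2 hy2] := gen_exists n KAt s ltac:(cvalid_lia).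
    exact: two_terms (dC_b2_row_low s_low hx hy1 hy2).
  case: (leqP s n) => [s_mid | s_high].
    have [y1 hy1] := gen_exists n KA s ltac:(cvalid_lia).
    have [y2 hy2] := gen_exists n KA s.+1 ltac:(cvalid_lia).
    by apply: two_terms (dC_b2_row_mid (ltnW n_ge3) _ hx hy1 hy2); lia.
  have [y1 hy1] := gen_exists n KA s ltac:(cvalid_lia).
  have [y2 hy2] := gen_exists n KAt s ltac:(cvalid_lia).
  by apply: two_terms (dC_b2_row_high _ hx hy1 hy2); lia.
- have [y1 hy1] := gen_exists n KA s.+1 ltac:(cvalid_lia).
  have [y2 hy2] := gen_exists n KAt s ltac:(cvalid_lia).
  exact: two_terms (dC_b3_row hx hy1 hy2).
Qed.

Lemma dvdp_setV1_dC_alpha (x y : Cgen n) :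
  kind y = KA -> 'X^(n - 1) %| setV1 (dC n x y).
Proof.
rewrite dCE => ->; have := MM_NN n; have := NN_ge n_ge3.
case: (kind x) => /=; move: (idx x) (idx y) => s t *; repeat case: ifP => ?;
  lazymatch goal with
  | |- context [setV1 0] => by rewrite rmorph0 dvdp0
  | |- _ => by rewrite setV1_mono dvdp_exp2l //; lia
  end.
Qed.

Lemma dvdp_act_dC_alpha (u : Cgen n -> {poly F2}) (y : Cgen n) :
  kind y = KA -> 'X^(n - 1) %| act setV1 (dC n) u y.
Proof.
move=> ky; rewrite /act; elim/big_ind: _ => [||x _]; [exact: dvdp0 | exact: dvdp_add |].
exact/dvdp_mull/dvdp_setV1_dC_alpha.
Qed.

Lemma setV1_dC_b2_mid (b am an : Cgen n) :
  is_gen b KB2 (n - 1) -> is_gen am KA (n - 1) -> is_gen an KA n ->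
  forall y, setV1 (dC n b y) = 'X^(MM n - (n - 1)) * torsion_cycle am an y.
Proof.
move=> hb ham han y.
have han' : is_gen an KA (n - 1).+1 by rewrite subn1 prednK //; lia.
rewrite (dC_b2_row_mid (ltnW n_ge3) _ hb ham han'); last by lia.
rewrite rmorphD !rmorphMn /= !setV1_mono.
rewrite -[in 'X^(MM n)](subnK (_ : n - 1 <= MM n)%N); last by rewrite MM_NN; lia.
by rewrite exprD /torsion_cycle; ring.
Qed.

End Differential.

(** * The bigrading of C_n^* *)

Section Grading.
Variables (n : nat) (grC : Cgen n -> int * int) (an : Cgen n).
Hypotheses (n_ge3 : (3 <= n)%N) (grC_hom : homogeneous grC grC (dC n) (-1, -1)).
Hypothesis an_gen : is_gen an KA n.

Let grU y := (grC y).1.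
Let grV y := (grC y).2.
Let far_below y := grU y <= grU an - (2 * n)%:Z \/ grV y <= grV an - (2 * n)%:Z.

Lemma gr_edge (x y : Cgen n) kx s ky t a c :
  is_gen x kx s -> is_gen y ky t -> dCf n kx s ky t = mono a c ->
  grU y = grU x - 1 + (2 * a)%:Z /\ grV y = grV x - 1 + (2 * c)%:Z.
Proof.
move=> hx hy; rewrite -(dC_gen hx hy) => dxy.
case: (grC_hom x y) => [d0 | [a' [c' [e [eU eV]]]]].
  by move: (mono_neq0 a c); rewrite -dxy d0 eqxx.
by move: e eU eV; rewrite dxy /grU /grV => /mono_exps_inj [-> ->] /= eU eV; split; lia.
Qed.

Lemma grV_alpha_succ_low s (x y : Cgen n) : (1 <= s <= n - 2)%N ->
  is_gen x KA s -> is_gen y KA s.+1 -> grV x <= grV y.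
Proof.
move=> hs hx hy.
have [b1 hb1] := gen_exists n KB1 s ltac:(cvalid_lia).
have [b2 hb2] := gen_exists n KB2 s ltac:(cvalid_lia).
have [ta hta] := gen_exists n KAt s ltac:(cvalid_lia).
have [_ e1] := gr_edge hb1 hx (dCf_b1_alpha n s).
have [_ e2] := gr_edge hb1 hta (dCf_b1_talpha n s).
have [_ e3] := gr_edge hb2 hta (dCf_b2_talpha_low n s ltac:(lia)).
have [_ e4] := gr_edge hb2 hy (dCf_b2_alpha_succ n s ltac:(lia)).
have := MM_NN n; have := NN_ge n_ge3; lia.
Qed.

Lemma grV_alpha_pred (x : Cgen n) : is_gen x KA (n - 1) -> grV x = grV an - (2 * n)%:Z.
Proof.
move=> hx; have [b hb] := gen_exists n KB2 (n - 1) ltac:(cvalid_lia).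
have an_gen' : is_gen an KA (n - 1).+1 by rewrite subn1 prednK //; lia.
have [_ e1] := gr_edge hb hx (dCf_b2_alpha n (n - 1) ltac:(lia) ltac:(lia)).
have [_ e2] := gr_edge hb an_gen' (dCf_b2_alpha_succ n (n - 1) ltac:(lia)).
have := MM_NN n; have := NN_ge n_ge3; lia.
Qed.

Lemma grV_alpha_low s (x : Cgen n) : (1 <= s <= n - 1)%N ->
  is_gen x KA s -> grV x <= grV an - (2 * n)%:Z.
Proof.
move=> hs; have [k sk] : exists k, (s + k = n - 1)%N by exists (n - 1 - s)%N; lia.
elim: k s x hs sk => [|k IH] s x hs sk hx.
  by rewrite addn0 in sk; subst s; rewrite grV_alpha_pred.
have [y hy] := gen_exists n KA s.+1 ltac:(cvalid_lia).
have hs' : (1 <= s <= n - 2)%N by lia.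
have := grV_alpha_succ_low hs' hx hy.
have := IH s.+1 y ltac:(lia) ltac:(lia) hy; lia.
Qed.

Lemma grU_alpha_succ_high s (x y : Cgen n) : (n + 1 <= s <= 2 * n - 2)%N ->
  is_gen x KA s -> is_gen y KA s.+1 -> grU y <= grU x.
Proof.
move=> hs hx hy.
have [b2 hb2] := gen_exists n KB2 s ltac:(cvalid_lia).
have [b3 hb3] := gen_exists n KB3 s ltac:(cvalid_lia).
have [ta hta] := gen_exists n KAt s ltac:(cvalid_lia).
have [e1 _] := gr_edge hb2 hx (dCf_b2_alpha n s ltac:(lia) ltac:(lia)).
have [e2 _] := gr_edge hb2 hta (dCf_b2_talpha_high n s ltac:(lia)).
have [e3 _] := gr_edge hb3 hta (dCf_b3_talpha n s).
have [e4 _] := gr_edge hb3 hy (dCf_b3_alpha_succ n s).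
have := MM_NN n; have := NN_ge n_ge3; lia.
Qed.

Lemma grU_alpha_succ (y : Cgen n) : is_gen y KA n.+1 -> grU y = grU an - (2 * n)%:Z.
Proof.
move=> hy; have [b hb] := gen_exists n KB2 n ltac:(cvalid_lia).
have [e1 _] := gr_edge hb an_gen (dCf_b2_alpha n n ltac:(lia) ltac:(lia)).
have [e2 _] := gr_edge hb hy (dCf_b2_alpha_succ n n (leqnn n)).
have := MM_NN n; have := NN_ge n_ge3; lia.
Qed.

Lemma grU_alpha_high s (x : Cgen n) : (n + 1 <= s <= 2 * n - 1)%N ->
  is_gen x KA s -> grU x <= grU an - (2 * n)%:Z.
Proof.
move=> hs; have [k sk] : exists k, (s = n.+1 + k)%N by exists (s - n.+1)%N; lia.
elim: k s x hs sk => [|k IH] s x hs sk hx.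
  by rewrite addn0 in sk; subst s; rewrite grU_alpha_succ.
have [y hy] := gen_exists n KA s.-1 ltac:(cvalid_lia).
have hx' : is_gen x KA s.-1.+1 by rewrite prednK //; lia.
have hs' : (n + 1 <= s.-1 <= 2 * n - 2)%N by lia.
have := grU_alpha_succ_high hs' hy hx'.
have := IH s.-1 y ltac:(lia) ltac:(lia) hy; lia.
Qed.

Lemma far_below_alpha s (x : Cgen n) : is_gen x KA s -> s != n -> far_below x.
Proof.
move=> hx s_neq; have := gen_valid x; case: (hx) => -> -> /= hs.
case: (ltngtP s n) => [s_lt | s_gt | s_eq]; last by rewrite s_eq eqxx in s_neq.
  by right; apply: (grV_alpha_low (s := s)) => //; lia.
by left; apply: (grU_alpha_high (s := s)) => //; lia.
Qed.

Lemma far_below_edge (x y : Cgen n) kx s ky t a c :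
  is_gen x kx s -> is_gen y ky t -> dCf n kx s ky t = mono a c ->
  (0 < a)%N -> (0 < c)%N -> far_below y -> far_below x.
Proof. by move=> hx hy /(gr_edge hx hy) [eU eV] a_gt0 c_gt0; rewrite /far_below; lia. Qed.

Lemma far_below_talpha s (x : Cgen n) : is_gen x KAt s -> far_below x.
Proof.
move=> hx; have := gen_valid x; case: (hx) => -> -> /= hs.
have [b hb] := gen_exists n KB2 s ltac:(cvalid_lia).
have := MM_NN n; have := NN_ge n_ge3.
case/orP: hs => hs.
  have [y hy] := gen_exists n KA s.+1 ltac:(cvalid_lia).
  have [_ e1] := gr_edge hb hx (dCf_b2_talpha_low n s ltac:(lia)).
  have [_ e2] := gr_edge hb hy (dCf_b2_alpha_succ n s ltac:(lia)).
  have := grV_alpha_low (s := s.+1) ltac:(lia) hy; rewrite /far_below; lia.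
have [y hy] := gen_exists n KA s ltac:(cvalid_lia).
have [e1 _] := gr_edge hb hx (dCf_b2_talpha_high n s ltac:(lia)).
have [e2 _] := gr_edge hb hy (dCf_b2_alpha n s ltac:(lia) ltac:(lia)).
have := grU_alpha_high (s := s) ltac:(lia) hy; rewrite /far_below; lia.
Qed.

Lemma grC_far_below (x : Cgen n) : x != an -> far_below x.
Proof.
move=> x_neq; have MN := MM_NN n; have Nn := NN_ge n_ge3.
have [k [s [hx hs]]] := gen_cases x; case: k hx hs => hx /= hs.
- apply: (far_below_alpha hx); apply: contraNneq x_neq => sn.
  by apply/eqP/(gen_inj hx); rewrite sn.
- exact: far_below_talpha hx.
- have [y hy] := gen_exists n KA s ltac:(cvalid_lia).
  by apply: (far_below_edge hx hy (dCf_b1_alpha n s)) (far_below_alpha hy _); lia.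
- have [to_succ | to_self] := boolP ((s <= n - 2)%N || (s == n)).
    have [y hy] := gen_exists n KA s.+1 ltac:(cvalid_lia).
    by apply: (far_below_edge hx hy (dCf_b2_alpha_succ n s _)) (far_below_alpha hy _); lia.
  have [y hy] := gen_exists n KA s ltac:(cvalid_lia).
  by apply: (far_below_edge hx hy (dCf_b2_alpha n s _ _)) (far_below_alpha hy _); lia.
- have [y hy] := gen_exists n KA s.+1 ltac:(cvalid_lia).
  by apply: (far_below_edge hx hy (dCf_b3_alpha_succ n s)) (far_below_alpha hy _); lia.
Qed.

Lemma homogeneous_alpha_n_offdiag (H : Cgen n -> Cgen n -> R) c1 c2 :
  homogeneous grC grC H (c1, c2) -> - (2 * n)%:Z < c1 -> - (2 * n)%:Z < c2 ->
  forall y, y != an -> H an y = 0.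
Proof.
move=> H_hom c1_gt c2_gt y y_neq; case: (H_hom an y) => [// | [a [b [_ [eU eV]]]]].
by have := grC_far_below y_neq; rewrite /far_below /grU /grV /= in eU eV *; lia.
Qed.

End Grading.

(** * The composite g o f *)

Lemma loc_iso_comp_row_neq0 (X Y : finType) (dX : X -> X -> R) (dY : Y -> Y -> R)
    (f : X -> Y -> R) (g : Y -> X -> R) (a : X) :
  (forall x, ev11 (\sum_y dX x y) = 0) -> (forall y, dX a y = 0) ->
  chain_map dX dY f -> loc_iso dX dY f -> loc_iso dY dX g ->
  exists y, mcomp f g a y != 0.
Proof.
move=> dX_ev a_cycle f_chain f_loc g_loc; apply/existsP; apply: contraT.
rewrite negb_exists => /forallP H0.
have w_loc : lvec (fun x => (x == a)%:R : K).
  by move=> x; rewrite -(rmorph_nat toK); exact: inL_toK.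
have w_cycle : act toK dX (fun x => (x == a)%:R) =1 (fun=> 0).
  by move=> y; rewrite act_delta a_cycle rmorph0.
exfalso; apply: (delta_not_loc_boundary dX_ev).
apply: loc_iso_comp_injective f_chain f_loc g_loc w_loc w_cycle _.
exists (fun=> 0); split=> [x|y]; first by rewrite -(rmorph0 toK); exact: inL_toK.
by rewrite act_delta act0; move/eqP: (negbNE (H0 y)) => ->; rewrite rmorph0.
Qed.

Section TorsionCycle.
Variables (n : nat) (am an : Cgen n).
Hypotheses (n_ge3 : (3 <= n)%N) (am_gen : is_gen am KA (n - 1)) (an_gen : is_gen an KA n).

Lemma act_torsion_cycle (Y : finType) (H : Cgen n -> Y -> R) y :
  act setV1 H (torsion_cycle am an) y = setV1 (H an y) + 'X^(n - 1) * setV1 (H am y).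
Proof. by rewrite actD actZ !act_delta. Qed.

Lemma torsion_cycle_is_cycle : act setV1 (dC n) (torsion_cycle am an) =1 (fun=> 0).
Proof.
move=> y; rewrite act_torsion_cycle !dC_alpha ?rmorph0 ?mulr0 ?addr0 //.
  by case: am_gen.
by case: an_gen.
Qed.

Lemma torsion_cycle_is_torsion (b : Cgen n) : is_gen b KB2 (n - 1) ->
  forall y, 'X^(MM n - (n - 1)) * torsion_cycle am an y =
            act setV1 (dC n) (fun x => (x == b)%:R) y.
Proof. by move=> hb y; rewrite act_delta /= (setV1_dC_b2_mid n_ge3 hb am_gen an_gen). Qed.

Lemma comp_torsion_cycle_boundary (B : finType) (dD : B -> B -> R)
    (f : Cgen n -> B -> R) (g : B -> Cgen n -> R) :
  knotlike dD -> chain_map (dC n) dD f -> chain_map dD (dC n) g ->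
  exists u, act setV1 (mcomp f g) (torsion_cycle am an) =1 act setV1 (dC n) u.
Proof.
move=> D_knot f_chain g_chain.
have [b hb] := gen_exists n KB2 (n - 1) ltac:(cvalid_lia).
have [u fu] : exists u, act setV1 f (torsion_cycle am an) =1 act setV1 dD u.
  apply: (knotlike_torsion_boundary (c := 'X^(MM n - (n - 1)))
           (w := act setV1 f (fun x => (x == b)%:R))) => //.
  - by rewrite expf_neq0 ?polyX_eq0.
  - exact: act_cycle torsion_cycle_is_cycle.
  move=> y; rewrite -actZ; apply: act_boundary => // x.
  exact: torsion_cycle_is_torsion.
exists (act setV1 g u) => x.
by rewrite -act_comp; apply: act_boundary.
Qed.

End TorsionCycle.

Theorem lemma2p12 (n : nat) (hn : (3 <= n)%N)
  (grC : Cgen n -> int * int) (hgrC : homogeneous grC grC (dC n) (-1, -1))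
  (B : finType) (grD : B -> int * int) (dD : B -> B -> R)
  (hD : is_complex grD dD) (hknot : knotlike dD)
  (f : Cgen n -> B -> R) (hf : local_map grC (dC n) grD dD f) :
  ~ exists g : B -> Cgen n -> R,
      local_map grD dD grC (dC n) g /\
      exists c1 c2 : int,
        homogeneous grC grC (mcomp f g) (c1, c2) /\
        - (2 * n)%:Z + 2 < c1 /\ - (2 * n)%:Z < c2.
Proof.
move=> [g [[_ [g_chain g_loc]] [c1 [c2 [H_hom [c1_gt c2_gt]]]]]].
have [_ [f_chain f_loc]] := hf.
have [an an_gen] := gen_exists n KA n ltac:(cvalid_lia).
have [am am_gen] := gen_exists n KA (n - 1) ltac:(cvalid_lia).
have H_row := homogeneous_alpha_n_offdiag hn hgrC an_gen H_hom ltac:(lia) c2_gt.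
have [y Hy] := loc_iso_comp_row_neq0 (ev11_sum_dC hn)
  (fun y => dC_alpha y an_gen.1) f_chain f_loc g_loc.
have y_an : y = an by apply/eqP; apply: contraNT Hy => /H_row ->.
have [k [l [Hkl k_lt]]] : exists k l, mcomp f g an an = mono k l /\ (k < n - 1)%N.
  case: (H_hom an an) => [H0 | [k [l [Hkl [eU _]]]]]; first by rewrite y_an H0 eqxx in Hy.
  by exists k, l; split=> //; move: eU => /=; lia.
have [u Hu] := comp_torsion_cycle_boundary hn am_gen an_gen hknot f_chain g_chain.
have := dvdp_act_dC_alpha hn u an_gen.1.
rewrite -Hu act_torsion_cycle Hkl setV1_mono dvdp_addl ?dvdp_mulr //.
by rewrite dvdp_Pexp2l ?size_polyX //; lia.
Qed.
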